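(* Let $\alpha: I\to M$ be a unit-speed curve on an oriented surface $M\subset E^3$ with Darboux frame $\{T,V,U\}$ and curvatures $k_g,k_n,\tau_g$, with $k_g(s)\neq 0$ for all $s\in I$. Let $c_1$ be a nonzero real constant, let $\psi$ be an antiderivative of $k_n\tau_g/k_g$ on $I$, and let $$\gamma(s)=\alpha(s)+c_1e^{-\psi(s)}\Big(\frac{\tau_g(s)}{k_g(s)}T(s)+U(s)\Big),$$ and assume $\gamma$ is regular. Then $\gamma$ is a general helix if and only if $\alpha$ is a helical curve on $M$.
   Context: $M$ is an oriented surface in Euclidean 3-space $E^3$ and $\alpha:I\to M$ is a unit-speed curve with arc-length parameter $s$. Its Darboux frame $\{T,V,U\}$ consists of the unit tangent $T=\alpha'$, the unit surface normal $U$ of $M$ along $\alpha$, and $V=U\times T$; it satisfies $T'=k_gV+k_nU$, $V'=-k_gT+\tau_gU$, $U'=-k_nT-\tau_gV$, where $k_g,k_n,\tau_g$ are the geodesic curvature, normal curvature and geodesic torsion. A regular curve is a general helix if its unit tangent makes a constant angle with a fixed direction. $\alpha$ is a helical curve on $M$ if $\langle T,d\rangle$ is constant for some fixed unit vector $d$. *)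

From Stdlib Require Import Reals.
From Coquelicot Require Import Coquelicot.
Open Scope R_scope.

Record vec := mkV { vx : R; vy : R; vz : R }.

Definition vadd (u v : vec) : vec := mkV (vx u + vx v) (vy u + vy v) (vz u + vz v).
Definition vscal (c : R) (v : vec) : vec := mkV (c * vx v) (c * vy v) (c * vz v).
Definition vopp (v : vec) : vec := vscal (-1) v.
Definition vdot (u v : vec) : R := vx u * vx v + vy u * vy v + vz u * vz v.
Definition vnorm (v : vec) : R := sqrt (vdot v v).
Definition vcross (u v : vec) : vec :=
  mkV (vy u * vz v - vz u * vy v)
      (vz u * vx v - vx u * vz v)
      (vx u * vy v - vy u * vx v).
Definition vzero : vec := mkV 0 0 0.

Definition vderiv (f : R -> vec) (s : R) (v : vec) : Prop :=
  is_derive (fun t => vx (f t)) s (vx v) /\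
  is_derive (fun t => vy (f t)) s (vy v) /\
  is_derive (fun t => vz (f t)) s (vz v).

Definition Iopen (a b : Rbar) (s : R) : Prop := Rbar_lt a s /\ Rbar_lt s b.

Definition regular_on (I : R -> Prop) (g : R -> vec) : Prop :=
  forall s, I s -> exists v, vderiv g s v /\ v <> vzero.

Definition general_helix_on (I : R -> Prop) (g : R -> vec) : Prop :=
  regular_on I g /\
  exists d : vec, vnorm d = 1 /\
  exists c : R, forall s v, I s -> vderiv g s v ->
    vdot (vscal (/ vnorm v) v) d = c.

Definition helical_on (I : R -> Prop) (T : R -> vec) : Prop :=
  exists d : vec, vnorm d = 1 /\
  exists c : R, forall s, I s -> vdot (T s) d = c.

Definition darboux_frame (I : R -> Prop) (alpha T V U : R -> vec)
  (kg kn tg : R -> R) : Prop :=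
  forall s, I s ->
    vderiv alpha s (T s) /\
    vdot (T s) (T s) = 1 /\ vdot (U s) (U s) = 1 /\ vdot (T s) (U s) = 0 /\
    V s = vcross (U s) (T s) /\
    vderiv T s (vadd (vscal (kg s) (V s)) (vscal (kn s) (U s))) /\
    vderiv V s (vadd (vscal (- kg s) (T s)) (vscal (tg s) (U s))) /\
    vderiv U s (vadd (vscal (- kn s) (T s)) (vscal (- tg s) (V s))).

From Stdlib Require Import Reals Lra Classical.
From Coquelicot Require Import Coquelicot.
Open Scope R_scope.

(* Along alpha, (tg/kg) T' + U' has no V-component, and psi' = kn tg / kg is
   chosen so that the factor exp(-psi) kills the U-component: gamma' = lam T with
   lam = 1 + c1 exp(-psi) ((tg/kg)' - kn ((tg/kg)^2 + 1)), and lam <> 0 by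
   regularity. Hence the unit tangent of gamma is sign(lam) T.
   If <T, d> = c <> 0, then <gamma, d>' = lam c never vanishes, so lam keeps its
   sign by Darboux's theorem (lam need not be continuous) and gamma is a helix.
   Conversely, if sign(lam) <T, d> is constant, the continuous function <T, d>
   takes only the values c and -c, hence is constant. *)

Lemma Iopen_between a b x y z :
  Iopen a b x -> Iopen a b y -> x <= z <= y -> Iopen a b z.
Proof.
  unfold Iopen; destruct a as [a| |], b as [b| |]; simpl; intuition lra.
Qed.

Lemma const_on_of_pairwise (I : R -> Prop) (f : R -> R) :
  (forall x y, I x -> I y -> f x = f y) -> exists c, forall s, I s -> f s = c.
Proof.
  intros Hf. destruct (classic (exists s0, I s0)) as [[s0 Hs0]|Hempty].
  - exists (f s0). intros s Hs. exact (Hf s s0 Hs Hs0).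
  - exists 0. intros s Hs. exfalso. exact (Hempty (ex_intro _ s Hs)).
Qed.

Lemma is_derive_continuity_pt (f : R -> R) (x l : R) : is_derive f x l -> continuity_pt f x.
Proof.
  intros H. apply derivable_continuous_pt. exists l. now apply is_derive_Reals.
Qed.

Lemma is_derive_increment_sign (G : R -> R) (x l : R) : is_derive G x l -> l <> 0 ->
  exists delta, 0 < delta /\
    forall h, h <> 0 -> Rabs h < delta -> 0 < l * (h * (G (x + h) - G x)).
Proof.
  intros HG Hl. apply is_derive_Reals in HG.
  destruct (HG (Rabs l) (Rabs_pos_lt l Hl)) as [delta Hdelta].
  exists delta. split; [apply cond_pos|]. intros h Hh Hhd.
  specialize (Hdelta h Hh Hhd).
  set (q := (G (x + h) - G x) / h) in Hdelta.
  replace (h * (G (x + h) - G x)) with (h * h * q) by (unfold q; field; exact Hh).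
  assert (Hq : 0 < l * q).
  { destruct (Rabs_def2 _ _ Hdelta).
    destruct (Rlt_or_le 0 l) as [Hp|Hn].
    - rewrite Rabs_pos_eq in * by lra. nra.
    - rewrite Rabs_left1 in * by lra. nra. }
  assert (0 < h * h) by (apply Rsqr_pos_lt; exact Hh). nra.
Qed.

Lemma derive_pos_propagates (G D : R -> R) (x y : R) : x < y ->
  (forall t, x <= t <= y -> is_derive G t (D t)) ->
  (forall t, x <= t <= y -> D t <> 0) ->
  0 < D x -> 0 < D y.
Proof.
  intros Hxy HG HD Hx.
  destruct (Rlt_or_le 0 (D y)) as [Hy|Hy]; [exact Hy|exfalso].
  assert (D y <> 0) by (apply HD; lra).
  destruct (continuity_ab_maj G x y) as [m [Hmax Hm]]; [lra| |].
  { intros t Ht. exact (is_derive_continuity_pt _ _ _ (HG t Ht)). }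
  destruct (is_derive_increment_sign G m (D m) (HG m Hm) (HD m Hm))
    as [delta [Hdelta Hinc]].
  (* G grows on one side of its maximum point m on [x, y]; the signs of D at
     the endpoints say that this side lies inside [x, y]. *)
  destruct (Rlt_or_le 0 (D m)) as [Hpos|Hneg].
  - assert (Hmy : m < y) by (destruct (Req_dec m y); [subst; lra|lra]).
    set (h := Rmin (delta / 2) ((y - m) / 2)).
    assert (0 < h) by (apply Rmin_pos; lra).
    assert (h <= delta / 2) by apply Rmin_l. assert (h <= (y - m) / 2) by apply Rmin_r.
    specialize (Hinc h ltac:(lra) ltac:(rewrite Rabs_pos_eq; lra)).
    specialize (Hmax (m + h) ltac:(lra)).
    assert (0 < D m * h) by nra. nra.
  - assert (HDm : D m < 0) by (destruct Hneg as [|E]; [lra|exfalso; exact (HD m Hm E)]).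
    assert (Hxm : x < m) by (destruct (Req_dec m x); [subst; lra|lra]).
    set (h := Rmin (delta / 2) ((m - x) / 2)).
    assert (0 < h) by (apply Rmin_pos; lra).
    assert (h <= delta / 2) by apply Rmin_l. assert (h <= (m - x) / 2) by apply Rmin_r.
    specialize (Hinc (- h) ltac:(lra) ltac:(rewrite Rabs_Ropp, Rabs_pos_eq; lra)).
    specialize (Hmax (m + - h) ltac:(lra)).
    assert (0 < D m * - h) by nra. nra.
Qed.

Lemma Iopen_sign_constant_of_lt (a b : Rbar) (f : R -> R) :
  (forall t, Iopen a b t -> f t <> 0) ->
  (forall u v, u < v -> Iopen a b u -> Iopen a b v -> 0 < f u * f v) ->
  forall x y, Iopen a b x -> Iopen a b y -> 0 < f x * f y.
Proof.
  intros Hf Hlt x y Hx Hy.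
  destruct (Rtotal_order x y) as [Hxy|[<-|Hxy]].
  - auto.
  - assert (f x <> 0) by auto. assert (0 < f x * f x) by (apply Rsqr_pos_lt; auto). lra.
  - rewrite Rmult_comm. auto.
Qed.

Lemma derive_sign_constant (a b : Rbar) (G D : R -> R) :
  (forall t, Iopen a b t -> is_derive G t (D t)) ->
  (forall t, Iopen a b t -> D t <> 0) ->
  forall x y, Iopen a b x -> Iopen a b y -> 0 < D x * D y.
Proof.
  intros HG HD. apply Iopen_sign_constant_of_lt; [exact HD|].
  intros u v Huv Hu Hv.
  assert (Hsub : forall t, u <= t <= v -> Iopen a b t) by eauto using Iopen_between.
  assert (D u <> 0) by auto.
  destruct (Rlt_or_le 0 (D u)) as [Hpos|Hneg].
  - assert (0 < D v) by (apply (derive_pos_propagates G D u v); auto). nra.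
  - assert (0 < - D v).
    { apply (derive_pos_propagates (fun t => - G t) (fun t => - D t) u v); auto.
      - intros t Ht. exact (is_derive_opp G t (D t) (HG t (Hsub t Ht))).
      - intros t Ht E. apply (HD t); auto. lra.
      - destruct Hneg as [|E]; [lra|]. exfalso. auto. }
    nra.
Qed.

Lemma continuous_sign_constant (a b : Rbar) (h : R -> R) :
  (forall t, Iopen a b t -> continuity_pt h t) ->
  (forall t, Iopen a b t -> h t <> 0) ->
  forall x y, Iopen a b x -> Iopen a b y -> 0 < h x * h y.
Proof.
  intros Hcont Hh. apply Iopen_sign_constant_of_lt; [exact Hh|].
  intros u v Huv Hu Hv.
  destruct (Rlt_or_le 0 (h u * h v)) as [Hpos|Hnpos]; [exact Hpos|exfalso].
  assert (h u <> 0) by auto. assert (h v <> 0) by auto.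
  assert (0 < h u * h u) by (apply Rsqr_pos_lt; auto).
  assert (h v * h u <> 0) by (apply Rmult_integral_contrapositive_currified; auto).
  destruct (Ranalysis5.IVT_interv (fun t => - (h t * h u)) u v) as [z [Hz Hz0]].
  - intros t Ht. apply continuity_pt_opp, continuity_pt_mult.
    + apply Hcont. eauto using Iopen_between.
    + apply continuity_pt_const. intros ? ?. reflexivity.
  - exact Huv.
  - lra.
  - lra.
  - apply (Hh z); [eauto using Iopen_between|]. nra.
Qed.

Lemma sign_pm1 x : x <> 0 -> sign x = 1 \/ sign x = -1.
Proof.
  intros Hx. destruct (Rlt_or_le 0 x) as [Hpos|Hneg].
  - left. exact (sign_eq_1 x Hpos).
  - right. apply sign_eq_m1. destruct Hneg as [|E]; [lra|contradiction].
Qed.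

Lemma sign_eq_of_mult_pos x y : 0 < x * y -> sign x = sign y.
Proof.
  intros Hxy. destruct (Rlt_or_le 0 x) as [Hx|Hx].
  - rewrite !sign_eq_1 by nra. reflexivity.
  - destruct Hx as [Hx|Hx]; [|subst; lra].
    rewrite !sign_eq_m1 by nra. reflexivity.
Qed.

Lemma sign_mul_Rabs x : sign x * Rabs x = x.
Proof.
  destruct (Rtotal_order 0 x) as [Hx|[<-|Hx]].
  - rewrite sign_eq_1, Rabs_pos_eq by lra. ring.
  - rewrite sign_0. ring.
  - rewrite sign_eq_m1, Rabs_left by lra. ring.
Qed.

Lemma vec_ext u v : vx u = vx v -> vy u = vy v -> vz u = vz v -> u = v.
Proof. destruct u, v; simpl; intros -> -> ->; reflexivity. Qed.

Lemma vderiv_unique f s u v : vderiv f s u -> vderiv f s v -> u = v.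
Proof.
  intros [Hux [Huy Huz]] [Hvx [Hvy Hvz]].
  apply is_derive_unique in Hux, Huy, Huz, Hvx, Hvy, Hvz.
  apply vec_ext; congruence.
Qed.

Lemma vderiv_add f g s u v :
  vderiv f s u -> vderiv g s v -> vderiv (fun t => vadd (f t) (g t)) s (vadd u v).
Proof.
  intros [Hfx [Hfy Hfz]] [Hgx [Hgy Hgz]].
  split; [|split]; simpl; now apply (is_derive_plus (V := R_NormedModule)).
Qed.

Lemma vderiv_scal (c : R -> R) (f : R -> vec) s l v :
  is_derive c s l -> vderiv f s v ->
  vderiv (fun t => vscal (c t) (f t)) s (vadd (vscal l (f s)) (vscal (c s) v)).
Proof.
  intros Hc [Hfx [Hfy Hfz]].
  split; [|split]; simpl.
  - exact (is_derive_mult c _ s l _ Hc Hfx Rmult_comm).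
  - exact (is_derive_mult c _ s l _ Hc Hfy Rmult_comm).
  - exact (is_derive_mult c _ s l _ Hc Hfz Rmult_comm).
Qed.

Lemma vderiv_vdot f s v d :
  vderiv f s v -> is_derive (fun t => vdot (f t) d) s (vdot v d).
Proof.
  intros [Hx [Hy Hz]]. unfold vdot.
  exact (is_derive_plus _ _ _ _ _
           (is_derive_plus _ _ _ _ _ (is_derive_scal_l _ _ _ (vx d) Hx)
                                     (is_derive_scal_l _ _ _ (vy d) Hy))
           (is_derive_scal_l _ _ _ (vz d) Hz)).
Qed.

Lemma vdot_scal_l c u v : vdot (vscal c u) v = c * vdot u v.
Proof. unfold vdot; simpl; ring. Qed.

Lemma vdot_scal_r c u v : vdot u (vscal c v) = c * vdot u v.
Proof. unfold vdot; simpl; ring. Qed.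

Lemma vnorm_scal_unit l u : vdot u u = 1 -> vnorm (vscal l u) = Rabs l.
Proof.
  intros Hu. unfold vnorm.
  rewrite vdot_scal_l, vdot_scal_r, Hu, Rmult_1_r.
  exact (sqrt_Rsqr_abs l).
Qed.

Section CurveAlongUnitField.

Variables (a b : Rbar) (g T : R -> vec) (lam : R -> R).
Hypothesis T_unit : forall s, Iopen a b s -> vdot (T s) (T s) = 1.
Hypothesis T_derivable : forall s, Iopen a b s -> exists dT, vderiv T s dT.
Hypothesis g_velocity : forall s, Iopen a b s -> vderiv g s (vscal (lam s) (T s)).
Hypothesis g_regular : regular_on (Iopen a b) g.

Lemma speed_neq0 s : Iopen a b s -> lam s <> 0.
Proof.
  intros Hs Hlam. destruct (g_regular s Hs) as [v [Hv Hv0]].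
  apply Hv0. rewrite (vderiv_unique _ _ _ _ Hv (g_velocity s Hs)), Hlam.
  apply vec_ext; simpl; ring.
Qed.

Lemma unit_tangent_vdot s v d : Iopen a b s -> vderiv g s v ->
  vdot (vscal (/ vnorm v) v) d = sign (lam s) * vdot (T s) d.
Proof.
  intros Hs Hv. rewrite (vderiv_unique _ _ _ _ Hv (g_velocity s Hs)).
  rewrite vnorm_scal_unit, !vdot_scal_l by auto.
  assert (Rabs (lam s) <> 0) by (apply Rabs_no_R0, speed_neq0, Hs).
  rewrite <- (sign_mul_Rabs (lam s)) at 2.
  field. assumption.
Qed.

Lemma helical_general_helix : helical_on (Iopen a b) T -> general_helix_on (Iopen a b) g.
Proof.
  intros [d [Hd [c Hc]]]. split; [exact g_regular|]. exists d. split; [exact Hd|].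
  assert (Hsign : forall x y, Iopen a b x -> Iopen a b y ->
            sign (lam x) * c = sign (lam y) * c).
  { intros x y Hx Hy. destruct (Req_dec c 0) as [->|Hc0]; [ring|].
    assert (Hpos : 0 < lam x * c * (lam y * c)).
    { apply (derive_sign_constant a b (fun t => vdot (g t) d) (fun t => lam t * c)); auto.
      - intros t Ht. rewrite <- (Hc t Ht), <- vdot_scal_l.
        exact (vderiv_vdot _ _ _ d (g_velocity t Ht)).
      - intros t Ht. apply Rmult_integral_contrapositive_currified; auto.
        now apply speed_neq0. }
    rewrite (sign_eq_of_mult_pos (lam x) (lam y)); [reflexivity|].
    assert (0 < c * c) by (apply Rsqr_pos_lt; exact Hc0). nra. }
  destruct (const_on_of_pairwise _ _ Hsign) as [c' Hc'].
  exists c'. intros s v Hs Hv.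
  rewrite (unit_tangent_vdot s v d Hs Hv), (Hc s Hs). auto.
Qed.

Lemma general_helix_helical : general_helix_on (Iopen a b) g -> helical_on (Iopen a b) T.
Proof.
  intros [_ [d [Hd [c Hc]]]]. exists d. split; [exact Hd|].
  apply const_on_of_pairwise.
  assert (Hpm : forall s, Iopen a b s -> vdot (T s) d = c \/ vdot (T s) d = - c).
  { intros s Hs. specialize (Hc s _ Hs (g_velocity s Hs)).
    rewrite (unit_tangent_vdot s _ d Hs (g_velocity s Hs)) in Hc.
    destruct (sign_pm1 (lam s) (speed_neq0 s Hs)) as [E|E]; rewrite E in Hc; lra. }
  intros x y Hx Hy. destruct (Req_dec c 0) as [Hc0|Hc0].
  { destruct (Hpm x Hx), (Hpm y Hy); lra. }
  assert (Hpos : 0 < vdot (T x) d * vdot (T y) d).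
  { apply (continuous_sign_constant a b (fun t => vdot (T t) d)); auto.
    - intros t Ht. destruct (T_derivable t Ht) as [dT HdT].
      exact (is_derive_continuity_pt _ _ _ (vderiv_vdot _ _ _ d HdT)).
    - intros t Ht. destruct (Hpm t Ht); lra. }
  destruct (Hpm x Hx), (Hpm y Hy); nra.
Qed.

Lemma general_helix_iff_helical :
  general_helix_on (Iopen a b) g <-> helical_on (Iopen a b) T.
Proof. split; [exact general_helix_helical | exact helical_general_helix]. Qed.

End CurveAlongUnitField.

Definition assoc_curve (alpha T U : R -> vec) (kg tg : R -> R) (c1 : R)
  (psi : R -> R) (s : R) : vec :=
  vadd (alpha s) (vscal (c1 * exp (- psi s)) (vadd (vscal (tg s / kg s) (T s)) (U s))).

Lemma assoc_curve_vderiv (alpha T V U : R -> vec) (kg kn tg psi : R -> R)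
    (c1 s dmu : R) :
  vderiv alpha s (T s) ->
  vderiv T s (vadd (vscal (kg s) (V s)) (vscal (kn s) (U s))) ->
  vderiv U s (vadd (vscal (- kn s) (T s)) (vscal (- tg s) (V s))) ->
  kg s <> 0 ->
  is_derive psi s (kn s * tg s / kg s) ->
  is_derive (fun t => tg t / kg t) s dmu ->
  vderiv (assoc_curve alpha T U kg tg c1 psi) s
    (vscal (1 + c1 * exp (- psi s) * (dmu - kn s * ((tg s / kg s) ^ 2 + 1))) (T s)).
Proof.
  intros Halpha HT HU Hkg Hpsi Hmu.
  assert (Hexp : is_derive (fun t => c1 * exp (- psi t)) s
                   (c1 * (- (kn s * tg s / kg s) * exp (- psi s)))).
  { apply is_derive_scal, (is_derive_comp exp (fun t => - psi t)).
    - apply is_derive_exp.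
    - exact (is_derive_opp psi s _ Hpsi). }
  pose proof (vderiv_add _ _ _ _ _ Halpha
                (vderiv_scal _ _ _ _ _ Hexp
                   (vderiv_add _ _ _ _ _ (vderiv_scal _ _ _ _ _ Hmu HT) HU))) as H.
  match type of H with vderiv _ _ ?w => replace (vscal _ (T s)) with w end.
  - exact H.
  - apply vec_ext; simpl; field; exact Hkg.
Qed.

Theorem theorem3p6 (a b : Rbar) (alpha T V U : R -> vec) (kg kn tg : R -> R)
  (c1 : R) (psi : R -> R)
  (Hframe : darboux_frame (Iopen a b) alpha T V U kg kn tg)
  (Hsmooth : forall s, Iopen a b s ->
     ex_derive kg s /\ ex_derive kn s /\ ex_derive tg s)
  (Hkg : forall s, Iopen a b s -> kg s <> 0)
  (Hc1 : c1 <> 0)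
  (Hpsi : forall s, Iopen a b s -> is_derive psi s (kn s * tg s / kg s))
  (Hreg : regular_on (Iopen a b)
     (fun s => vadd (alpha s)
        (vscal (c1 * exp (- psi s))
           (vadd (vscal (tg s / kg s) (T s)) (U s))))) :
  general_helix_on (Iopen a b)
     (fun s => vadd (alpha s)
        (vscal (c1 * exp (- psi s))
           (vadd (vscal (tg s / kg s) (T s)) (U s))))
  <-> helical_on (Iopen a b) T.
Proof.
  set (mu := fun t => tg t / kg t).
  apply (general_helix_iff_helical a b (assoc_curve alpha T U kg tg c1 psi) T
           (fun s => 1 + c1 * exp (- psi s) * (Derive mu s - kn s * (mu s ^ 2 + 1)))).
  - intros s Hs. apply (Hframe s Hs).
  - intros s Hs. eexists. apply (Hframe s Hs).
  - intros s Hs.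
    destruct (Hframe s Hs) as [Halpha [_ [_ [_ [_ [HT [_ HU]]]]]]].
    destruct (Hsmooth s Hs) as [Hdkg [_ Hdtg]].
    apply (assoc_curve_vderiv alpha T V U kg kn tg psi); auto.
    apply Derive_correct, ex_derive_div; auto.
  - exact Hreg.
Qed.
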